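(* In any execution of $\mathcal{U}$, let $Seq = (Seq_1,\dots,Seq_k)$ be the sequence, in time order, of all executions of line 12 that returned true up to and including some time $T$. Then for all $1 \le j < i \le k$, $Seq_j$ and $Seq_i$ are executions of line 12 for different operations.
   Context: Model: an asynchronous shared-memory system with possibly infinitely many processes, any of which may crash, communicating via atomic shared objects. A fetch-and-increment (F\&I) object stores an integer; F\&I$(C)$ atomically returns the current value and increments it. A generalized-compare-and-swap (GCAS) object $O$ stores a value and supports Read$(O)$ and GCAS$(c, O, v_1, v_2)$, which atomically does: if $c(\text{current value of } O, v_1)$ holds then set $O := v_2$ and return true, else return false. Tuples are compared componentwise for $=$; GCAS$(>, A, (t,-,-), v)$ succeeds iff the time field of $A$ is strictly greater than $t$. Implemented type $\mathcal{T} = (OP, RES, Q, \delta)$ with initial state $s_0$; a procedure $apply_{\mathcal{T}}(o,s)$ returns some $(s',r)$ with $(s,o,s',r)\in\delta$. $NULL$ is a value different from every response of $\mathcal{T}$, and $NOOP$ is a name different from every operation of $\mathcal{T}$. Algorithm $\mathcal{U}$: each process $p$ owns a GCAS object $H_p$ with fields $(time, response)$. Shared objects: F\&I object $C$, initially $1$; GCAS object $A$ with fields $(time, op, ptr)$, initially $(0, NOOP, h(NOOP))$, where $h(NOOP)$ is a pointer to an immutable location containing $(0,\perp)$; GCAS object $S$ with fields $(time, state, response, ptr)$, initially $(0, s_0, \perp, h(NOOP))$. Process $p$ performs operation $o$ by calling DoOp$(o)$: (1) DoOp$(o)$ invoked; (2) $t := $ F\&I$(C)$; (3) $H_p := (t,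 NULL)$; (4) while $H_p = (t, NULL)$ do: (5) $(t^*, s^*, r^*, roptr^* ) := S$; (6) GCAS$(=, *roptr^*, (t^*, NULL), (t^*, r^* ))$; (7) GCAS$(>, A, (t,-,-), (t, o, \&H_p))$; (8) $(t', o', roptr') := A$; (9) $(\hat t, \hat r) := *roptr'$; (10) if $(\hat t,\hat r) = (t', NULL)$ then (11) $(s', r') := apply_{\mathcal{T}}(o', s^* )$; (12) GCAS$(=, S, (t^*,s^*,r^*,roptr^* ), (t', s', r', roptr'))$; (13) else GCAS$(=, A, (t', o', roptr'), (t, o, \&H_p))$; end while; (14) return $H_p.response$. Notation: an ''operation'' $o$ means one invocation of DoOp$(o)$ (or the initial $NOOP$). $p(o)$ is the process executing it; $t(o)$ is the value returned by its F\&I at line 2, or $\infty$ if line 2 has not been executed; $h(o)$ is $H_{p(o)}$. For $NOOP$: $t(NOOP)=0$ and $h(NOOP)$ is the immutable location containing $(0,\perp)$. ''Line 12 is executed for $o$'' means the new value written in that GCAS has the form $(t(o), -, r, h(o))$. *)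

(* Operational model of algorithm U (universal construction
   from F&I + GCAS objects) as a labelled transition system.  *)
From Stdlib Require Import Arith.

Set Implicit Arguments.

Inductive rval (RES : Type) : Type :=
| Bot : rval RES
| Null : rval RES
| Res : RES -> rval RES.
Arguments Bot {RES}.
Arguments Null {RES}.

(* Pointers to response objects: h(NOOP) (immutable location containing
   (0,bot)) or &H_p for a process p (processes are indexed by nat:
   possibly infinitely many processes). *)
Inductive ptr : Type := PNoop | PH (p : nat).

(* Local state of a process = program counter together with the values of
   the local variables that are live at that point.  AtK means "next step
   executes line K".
   Names: o, t = argument and ticket; ts ss rs ps = t_star, s_star, r_star, roptr_star;
   t1 o1 p1 = t', o', roptr'; th rh = t^, r^; s1 r1 = s', r'.
   The op field o' of A is an option: None = NOOP. *)
Inductive lstate (OP Q RES : Type) : Type :=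
| Idle
| At2 (o : OP)
| At3 (o : OP) (t : nat)
| At4 (o : OP) (t : nat)
| At5 (o : OP) (t : nat)
| At6 (o : OP) (t : nat) (ts : nat) (ss : Q) (rs : rval RES) (ps : ptr)
| At7 (o : OP) (t : nat) (ts : nat) (ss : Q) (rs : rval RES) (ps : ptr)
| At8 (o : OP) (t : nat) (ts : nat) (ss : Q) (rs : rval RES) (ps : ptr)
| At9 (o : OP) (t : nat) (ts : nat) (ss : Q) (rs : rval RES) (ps : ptr)
      (t1 : nat) (o1 : option OP) (p1 : ptr)
| At10 (o : OP) (t : nat) (ts : nat) (ss : Q) (rs : rval RES) (ps : ptr)
      (t1 : nat) (o1 : option OP) (p1 : ptr) (th : nat) (rh : rval RES)
| At11 (o : OP) (t : nat) (ts : nat) (ss : Q) (rs : rval RES) (ps : ptr)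
      (t1 : nat) (o1 : option OP) (p1 : ptr)
| At12 (o : OP) (t : nat) (ts : nat) (ss : Q) (rs : rval RES) (ps : ptr)
      (t1 : nat) (o1 : option OP) (p1 : ptr) (s1 : Q) (r1 : RES)
| At13 (o : OP) (t : nat) (t1 : nat) (o1 : option OP) (p1 : ptr)
| At14 (o : OP) (t : nat).
Arguments Idle {OP Q RES}.
Arguments At2 {OP Q RES}.
Arguments At3 {OP Q RES}.
Arguments At4 {OP Q RES}.
Arguments At5 {OP Q RES}.
Arguments At6 {OP Q RES}.
Arguments At7 {OP Q RES}.
Arguments At8 {OP Q RES}.
Arguments At9 {OP Q RES}.
Arguments At10 {OP Q RES}.
Arguments At11 {OP Q RES}.
Arguments At12 {OP Q RES}.
Arguments At13 {OP Q RES}.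
Arguments At14 {OP Q RES}.

(* Global configuration: shared objects C, A, S, H_p, local states, and a
   ghost counter inv p = number of DoOp invocations started by p (used only
   to name operations). *)
Record config (OP Q RES : Type) : Type := Cfg {
  cC : nat;
  cA : nat * option OP * ptr;                 (* (time, op, ptr) *)
  cS : nat * Q * rval RES * ptr;              (* (time, state, response, ptr) *)
  cH : nat -> nat * rval RES;                 (* H_p = (time, response) *)
  cloc : nat -> lstate OP Q RES;
  cinv : nat -> nat
}.

Definition upd {X : Type} (f : nat -> X) (p : nat) (x : X) : nat -> X :=
  fun q => if Nat.eqb q p then x else f q.

Definition deref {RES : Type} (H : nat -> nat * rval RES) (x : ptr)
  : nat * rval RES :=
  match x with PNoop => (0, Bot) | PH q => H q end.

(* Initial configuration; H0 = (arbitrary, unspecified) initial contents of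
   the objects H_p. *)
Definition init {OP Q RES : Type} (s0 : Q) (H0 : nat -> nat * rval RES)
  : config OP Q RES :=
  {| cC := 1; cA := (0, None, PNoop); cS := (0, s0, Bot, PNoop);
     cH := H0; cloc := fun _ => Idle; cinv := fun _ => 0 |}.

(* Step labels.  LFI p v: p executed line 2 and F&I returned v.
   LSucc12 p w: p executed line 12, the GCAS returned true and wrote w into S.
   LOther p: any other step of p. *)
Inductive label (Q RES : Type) : Type :=
| LFI (p : nat) (v : nat)
| LSucc12 (p : nat) (w : nat * Q * rval RES * ptr)
| LOther (p : nat).
Arguments LFI {Q RES}.
Arguments LSucc12 {Q RES}.
Arguments LOther {Q RES}.

Section Step.
Context {OP Q RES : Type} (delta : Q -> OP -> Q -> RES -> Prop).
Notation cfg := (config OP Q RES).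

Definition setloc (c : cfg) p l : cfg :=
  {| cC := cC c; cA := cA c; cS := cS c; cH := cH c;
     cloc := upd (cloc c) p l; cinv := cinv c |}.

(* One atomic step of process p (each line is one atomic step). *)
Inductive step : cfg -> label Q RES -> cfg -> Prop :=
(* line 1: invocation of DoOp(o) (o chosen by the environment) *)
| st1 c p o :
    cloc c p = Idle ->
    step c (LOther p)
      {| cC := cC c; cA := cA c; cS := cS c; cH := cH c;
         cloc := upd (cloc c) p (At2 o); cinv := upd (cinv c) p (S (cinv c p)) |}
(* line 2: t := F&I(C) *)
| st2 c p o :
    cloc c p = At2 o ->
    step c (LFI p (cC c))
      {| cC := S (cC c); cA := cA c; cS := cS c; cH := cH c;
         cloc := upd (cloc c) p (At3 o (cC c)); cinv := cinv c |}
(* line 3: H_p := (t, NULL) *)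
| st3 c p o t :
    cloc c p = At3 o t ->
    step c (LOther p)
      {| cC := cC c; cA := cA c; cS := cS c; cH := upd (cH c) p (t, Null);
         cloc := upd (cloc c) p (At4 o t); cinv := cinv c |}
(* line 4: while H_p = (t, NULL) *)
| st4_in c p o t :
    cloc c p = At4 o t -> cH c p = (t, Null) ->
    step c (LOther p) (setloc c p (At5 o t))
| st4_out c p o t :
    cloc c p = At4 o t -> cH c p <> (t, Null) ->
    step c (LOther p) (setloc c p (At14 o t))
| st5 c p o t ts ss rs ps :
    cloc c p = At5 o t -> cS c = (ts, ss, rs, ps) ->
    step c (LOther p) (setloc c p (At6 o t ts ss rs ps))
(* line 6: GCAS(=, deref roptr_star, (t_star,NULL), (t_star,r_star)) *)
| st6_ok c p o t ts ss rs q :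
    cloc c p = At6 o t ts ss rs (PH q) -> cH c q = (ts, Null) ->
    step c (LOther p)
      {| cC := cC c; cA := cA c; cS := cS c; cH := upd (cH c) q (ts, rs);
         cloc := upd (cloc c) p (At7 o t ts ss rs (PH q)); cinv := cinv c |}
| st6_fail c p o t ts ss rs ps :
    cloc c p = At6 o t ts ss rs ps -> deref (cH c) ps <> (ts, Null) ->
    step c (LOther p) (setloc c p (At7 o t ts ss rs ps))
(* line 7: GCAS(>, A, (t,-,-), (t, o, &H_p)) *)
| st7_ok c p o t ts ss rs ps a1 a2 a3 :
    cloc c p = At7 o t ts ss rs ps -> cA c = (a1, a2, a3) -> t < a1 ->
    step c (LOther p)
      {| cC := cC c; cA := (t, Some o, PH p); cS := cS c; cH := cH c;
         cloc := upd (cloc c) p (At8 o t ts ss rs ps); cinv := cinv c |}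
| st7_fail c p o t ts ss rs ps a1 a2 a3 :
    cloc c p = At7 o t ts ss rs ps -> cA c = (a1, a2, a3) -> a1 <= t ->
    step c (LOther p) (setloc c p (At8 o t ts ss rs ps))
| st8 c p o t ts ss rs ps t1 o1 p1 :
    cloc c p = At8 o t ts ss rs ps -> cA c = (t1, o1, p1) ->
    step c (LOther p) (setloc c p (At9 o t ts ss rs ps t1 o1 p1))
(* line 9: (t^, r^) := deref roptr' *)
| st9 c p o t ts ss rs ps t1 o1 p1 th rh :
    cloc c p = At9 o t ts ss rs ps t1 o1 p1 -> deref (cH c) p1 = (th, rh) ->
    step c (LOther p) (setloc c p (At10 o t ts ss rs ps t1 o1 p1 th rh))
| st10_then c p o t ts ss rs ps t1 o1 p1 th rh :
    cloc c p = At10 o t ts ss rs ps t1 o1 p1 th rh -> (th, rh) = (t1, Null) ->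
    step c (LOther p) (setloc c p (At11 o t ts ss rs ps t1 o1 p1))
| st10_else c p o t ts ss rs ps t1 o1 p1 th rh :
    cloc c p = At10 o t ts ss rs ps t1 o1 p1 th rh -> (th, rh) <> (t1, Null) ->
    step c (LOther p) (setloc c p (At13 o t t1 o1 p1))
(* line 11: (s', r') := apply_T(o', s_star) -- any result allowed by delta
   (if o' were NOOP, which cannot happen, any result is allowed) *)
| st11 c p o t ts ss rs ps t1 o1 p1 s1 r1 :
    cloc c p = At11 o t ts ss rs ps t1 o1 p1 ->
    (forall oo, o1 = Some oo -> delta ss oo s1 r1) ->
    step c (LOther p) (setloc c p (At12 o t ts ss rs ps t1 o1 p1 s1 r1))
(* line 12: GCAS(=, S, (t_star,s_star,r_star,roptr_star), (t',s',r',roptr')) *)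
| st12_ok c p o t ts ss rs ps t1 o1 p1 s1 r1 :
    cloc c p = At12 o t ts ss rs ps t1 o1 p1 s1 r1 ->
    cS c = (ts, ss, rs, ps) ->
    step c (LSucc12 p (t1, s1, Res r1, p1))
      {| cC := cC c; cA := cA c; cS := (t1, s1, Res r1, p1); cH := cH c;
         cloc := upd (cloc c) p (At4 o t); cinv := cinv c |}
| st12_fail c p o t ts ss rs ps t1 o1 p1 s1 r1 :
    cloc c p = At12 o t ts ss rs ps t1 o1 p1 s1 r1 ->
    cS c <> (ts, ss, rs, ps) ->
    step c (LOther p) (setloc c p (At4 o t))
(* line 13: GCAS(=, A, (t',o',roptr'), (t, o, &H_p)) *)
| st13_ok c p o t t1 o1 p1 :
    cloc c p = At13 o t t1 o1 p1 -> cA c = (t1, o1, p1) ->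
    step c (LOther p)
      {| cC := cC c; cA := (t, Some o, PH p); cS := cS c; cH := cH c;
         cloc := upd (cloc c) p (At4 o t); cinv := cinv c |}
| st13_fail c p o t t1 o1 p1 :
    cloc c p = At13 o t t1 o1 p1 -> cA c <> (t1, o1, p1) ->
    step c (LOther p) (setloc c p (At4 o t))
(* line 14: return H_p.response *)
| st14 c p o t :
    cloc c p = At14 o t ->
    step c (LOther p) (setloc c p Idle).
End Step.

(* Operations: the initial NOOP, or the n-th invocation of DoOp by process p
   (n >= 1). *)
Inductive opid : Type := ONoop | OInv (p n : nat).

Definition hof (o : opid) : ptr :=
  match o with ONoop => PNoop | OInv p _ => PH p end.

(* tof cfg lab T o v : in the execution prefix consisting of steps 0..T-1,
   t(o) = v (i.e. the F&I of o at line 2 has been executed and returned v;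
   t(NOOP) = 0).  If no such v exists, t(o) = infinity. *)
Definition tof {OP Q RES : Type} (cfg : nat -> config OP Q RES)
  (lab : nat -> label Q RES) (T : nat) (o : opid) (v : nat) : Prop :=
  match o with
  | ONoop => v = 0
  | OInv p n => exists i, i < T /\ lab i = LFI p v /\ cinv (cfg i) p = n
  end.

Definition is_succ12 {Q RES : Type} (l : label Q RES) : Prop :=
  exists p w, l = LSucc12 p w.

(* Step i is an execution of line 12 for operation o: the new value written
   has the form (t(o), -, -, h(o)). *)
Definition line12_for {OP Q RES : Type} (cfg : nat -> config OP Q RES)
  (lab : nat -> label Q RES) (T : nat) (i : nat) (o : opid) : Prop :=
  exists p t1 s1 r1 p1,
    lab i = LSucc12 p (t1, s1, r1, p1) /\ tof cfg lab T o t1 /\ p1 = hof o.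

(* Call (t, x) the pair of time stamp and pointer of an S value.  Pairs written
   into S by successful line-12 GCASes never repeat.  A process commits
   (t', &H_r) only if, after sealing at line 6 the pointer of the S value it read
   at line 5, it found H_r = (t', NULL) at line 9.  Every pair that has been
   written into S and has since been overwritten is sealed for good: its H holds
   a non-NULL response under that time stamp, and H_r is reset to NULL only by r
   itself at line 3 with a fresh ticket.  Hence an already written
   (t', &H_r) could only be the pair currently in S -- but that pair is sealed.
   As the GCAS succeeds only if S holds the value read at line 5, which by
   induction S cannot have left and re-entered, the committed pair is new.  Finally t' is the ticket of r's operation, and
   distinct invocations of r draw distinct tickets, so the pair determines the
   operation. *)
From Stdlib Require Import Arith Lia List.
Import ListNotations.

Set Implicit Arguments.
Unset Strict Implicit.

Lemma upd_same {X : Type} (f : nat -> X) p x : upd f p x p = x.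
Proof. unfold upd; now rewrite Nat.eqb_refl. Qed.

Lemma upd_other {X : Type} (f : nat -> X) p x q : q <> p -> upd f p x q = f q.
Proof. intro Hqp; unfold upd; now destruct (Nat.eqb_spec q p). Qed.

Lemma time_ptr_eq_dec (x y : nat * ptr) : {x = y} + {x <> y}.
Proof. decide equality; [decide equality|]; apply Nat.eq_dec. Qed.

Definition actor {Q RES : Type} (l : label Q RES) : nat :=
  match l with LFI p _ | LSucc12 p _ | LOther p => p end.

Lemma is_succ12_dec {Q RES : Type} (l : label Q RES) : is_succ12 l \/ ~ is_succ12 l.
Proof.
  destruct l as [p v | p w | p]; [right | left; exists p, w; reflexivity | right];
    intros (q & w & E); discriminate.
Qed.

Definition at_ptr (P : nat -> nat -> Prop) (t : nat) (x : ptr) : Prop :=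
  match x with PNoop => True | PH r => P t r end.

Lemma at_ptr_impl (P P' : nat -> nat -> Prop) t x :
  (forall t r, P t r -> P' t r) -> at_ptr P t x -> at_ptr P' t x.
Proof. destruct x; simpl; auto. Qed.

Section Invariant.
Context {OP Q RES : Type} (delta : Q -> OP -> Q -> RES -> Prop).
Notation cfgT := (config OP Q RES).
Notation labelT := (label Q RES).
Notation ustep := (step delta).

Definition issued (c : cfgT) (t r : nat) : Prop :=
  t < cC c /\ forall o, cloc c r <> At3 o t.

(* r never again executes line 3 with an issued ticket t, so a sealed pair
   stays sealed. *)
Definition sealed (c : cfgT) (t r : nat) : Prop :=
  issued c t r /\ cH c r <> (t, Null).

Definition writes (l : labelT) (t : nat) (x : ptr) : Prop :=
  exists q s rs, l = LSucc12 q (t, s, rs, x).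

Fixpoint written (h : list labelT) (t : nat) (x : ptr) : Prop :=
  match h with
  | [] => False
  | l :: h => writes l t x \/ written h t x
  end.

(* The pairs S has ever held, including its initial pair (0, h(NOOP)). *)
Definition recorded (h : list labelT) (t : nat) (x : ptr) : Prop :=
  x = PNoop \/ written h t x.

Definition spair (v : nat * Q * rval RES * ptr) : nat * ptr :=
  let '(t, _, _, x) := v in (t, x).

Definition S_valid (c : cfgT) (h : list labelT) (v : nat * Q * rval RES * ptr) : Prop :=
  let '(ts, _, rs, ps) := v in
  rs <> Null /\ recorded h ts ps /\ at_ptr (issued c) ts ps.

Definition sealed_recorded (c : cfgT) (h : list labelT) (ts : nat) (ps : ptr) : Prop :=
  recorded h ts ps /\ at_ptr (sealed c) ts ps.

Definition A_valid (c : cfgT) (h : list labelT) (a : nat * option OP * ptr) : Prop :=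
  let '(t, _, x) := a in at_ptr (fun t r => In (LFI r t) h /\ issued c t r) t x.

(* If the line-12 GCAS on S with expected value [v] succeeded now, the pair
   (t1, p1) it writes would be new. *)
Definition commit_fresh (c : cfgT) (h : list labelT) (v : nat * Q * rval RES * ptr)
    (t1 : nat) (p1 : ptr) : Prop :=
  p1 <> PNoop /\ (cS c = v -> ~ written h t1 p1).

Definition local_valid (c : cfgT) (h : list labelT) (q : nat) (s : lstate OP Q RES) : Prop :=
  match s with
  | Idle | At2 _ => True
  | At3 _ t | At4 _ t | At5 _ t | At13 _ t _ _ _ | At14 _ t => In (LFI q t) h
  | At6 _ t ts ss rs ps => In (LFI q t) h /\ S_valid c h (ts, ss, rs, ps)
  | At7 _ t ts _ _ ps | At8 _ t ts _ _ ps =>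
      In (LFI q t) h /\ sealed_recorded c h ts ps
  | At9 _ t ts _ _ ps t1 o1 p1 =>
      In (LFI q t) h /\ sealed_recorded c h ts ps /\ A_valid c h (t1, o1, p1)
  | At10 _ t ts ss rs ps t1 o1 p1 th rh =>
      In (LFI q t) h /\ sealed_recorded c h ts ps /\ A_valid c h (t1, o1, p1) /\
      ((th, rh) = (t1, Null) -> commit_fresh c h (ts, ss, rs, ps) t1 p1)
  | At11 _ t ts ss rs ps t1 o1 p1 | At12 _ t ts ss rs ps t1 o1 p1 _ _ =>
      In (LFI q t) h /\ sealed_recorded c h ts ps /\ A_valid c h (t1, o1, p1) /\
      commit_fresh c h (ts, ss, rs, ps) t1 p1
  end.

Record invariant (c : cfgT) (h : list labelT) : Prop := {
  inv_tickets : forall r t, In (LFI r t) h -> t < cC c;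
  inv_A : A_valid c h (cA c);
  inv_S : S_valid c h (cS c);
  inv_overwritten : forall t r,
    written h t (PH r) -> spair (cS c) <> (t, PH r) -> sealed c t r;
  inv_local : forall q, local_valid c h q (cloc c q) }.

Lemma invariant_init (s0 : Q) (H0 : nat -> nat * rval RES) : invariant (init s0 H0) [].
Proof.
  split; simpl.
  - intros r t [].
  - exact I.
  - split; [discriminate | split; [left |]; reflexivity].
  - intros t r [].
  - intro; exact I.
Qed.

Lemma step_cC c l c' : ustep c l c' -> cC c <= cC c'.
Proof. intro Hs; destruct Hs; simpl; lia. Qed.

Lemma step_cloc_other c l c' q : ustep c l c' -> q <> actor l -> cloc c' q = cloc c q.
Proof. intros Hs Hq; destruct Hs; unfold setloc; simpl in *; apply upd_other; exact Hq. Qed.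

Lemma step_enter_At3 c l c' r o t :
  ustep c l c' -> cloc c' r = At3 o t -> cloc c r = At3 o t \/ t = cC c.
Proof.
  intros Hs E; destruct Hs; unfold setloc in *; simpl in *; unfold upd in E;
    destruct (Nat.eqb_spec r p); subst; auto; try discriminate.
  injection E; auto.
Qed.

Lemma step_H_null c l c' r t :
  ustep c l c' -> cH c' r = (t, Null) -> cH c r = (t, Null) \/ exists o, cloc c r = At3 o t.
Proof.
  intros Hs E; destruct Hs; unfold setloc in *; simpl in *; auto; unfold upd in E.
  - destruct (Nat.eqb_spec r p); [subst; injection E; intros; subst; eauto | auto].
  - destruct (Nat.eqb_spec r q); [subst; injection E; intros; subst; auto | auto].
Qed.

Lemma issued_step c l c' t r : ustep c l c' -> issued c t r -> issued c' t r.
Proof.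
  intros Hs [Ht Hloc]; split.
  - pose proof (step_cC Hs); lia.
  - intros o E; destruct (step_enter_At3 Hs E) as [E' | E']; [exact (Hloc o E') | lia].
Qed.

Lemma sealed_step c l c' t r : ustep c l c' -> sealed c t r -> sealed c' t r.
Proof.
  intros Hs [Hi HH]; split; [exact (issued_step Hs Hi) |].
  intro E; destruct (step_H_null Hs E) as [E' | [o E']];
    [exact (HH E') | exact (proj2 Hi o E')].
Qed.

Lemma step_cS_nonsucc c l c' : ustep c l c' -> ~ is_succ12 l -> cS c' = cS c.
Proof.
  intros Hs Hn; destruct Hs; unfold setloc; simpl; auto.
  exfalso; apply Hn; do 2 eexists; reflexivity.
Qed.

Lemma step_cS_succ c q w c' : ustep c (LSucc12 q w) c' -> cS c' = w.
Proof. intro Hs; inversion Hs; reflexivity. Qed.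

Lemma written_other l h t x : ~ is_succ12 l -> written (l :: h) t x -> written h t x.
Proof. intros Hn [(q & s & rs & ->) | Hw]; [exfalso; apply Hn; do 2 eexists |]; eauto. Qed.

Lemma succ12_fresh c h q t1 s1 rs1 p1 c' :
  invariant c h -> ustep c (LSucc12 q (t1, s1, rs1, p1)) c' ->
  exists r, p1 = PH r /\ ~ written h t1 (PH r) /\ In (LFI r t1) h /\ issued c t1 r.
Proof.
  intros Hinv Hs; inversion Hs; subst.
  pose proof (inv_local Hinv q) as Hloc.
  match goal with Hq : cloc c q = _ |- _ => rewrite Hq in Hloc end.
  destruct Hloc as (_ & _ & HA & Hp1 & Hfresh).
  destruct p1 as [| r]; [contradiction |].
  exists r; split; [reflexivity | split; [apply Hfresh; assumption | exact HA]].
Qed.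

Lemma succ12_overwrites_sealed c h q w c' :
  invariant c h -> ustep c (LSucc12 q w) c' ->
  let '(ts, ps) := spair (cS c) in at_ptr (sealed c) ts ps.
Proof.
  intros Hinv Hs; inversion Hs; subst.
  pose proof (inv_local Hinv q) as Hloc.
  match goal with Hq : cloc c q = _ |- _ => rewrite Hq in Hloc end.
  match goal with ES : cS c = _ |- _ => rewrite ES end.
  destruct Hloc as (_ & (_ & Hsealed) & _); exact Hsealed.
Qed.

Lemma succ12_not_recorded c h l c' ts ss rs ps :
  invariant c h -> ustep c l c' -> cS c' = (ts, ss, rs, ps) -> recorded h ts ps ->
  ~ is_succ12 l.
Proof.
  intros Hinv Hs ES Hrec (q & [[[t1 s1] rs1] p1] & ->).
  rewrite (step_cS_succ Hs) in ES; injection ES as -> _ _ ->.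
  destruct (succ12_fresh Hinv Hs) as (r & -> & Hnew & _).
  destruct Hrec as [Hnoop | Hw]; [discriminate | exact (Hnew Hw)].
Qed.

Lemma written_unsealed_current c h t r :
  invariant c h -> written h t (PH r) -> cH c r = (t, Null) -> spair (cS c) = (t, PH r).
Proof.
  intros Hinv Hw HH.
  destruct (time_ptr_eq_dec (spair (cS c)) (t, PH r)) as [Ecur | Eold]; [exact Ecur |].
  destruct (inv_overwritten Hinv Hw Eold) as [_ Hne]; contradiction.
Qed.

Lemma recorded_cons l h t x : recorded h t x -> recorded (l :: h) t x.
Proof. intros [Hnoop | Hw]; [left | right; right]; assumption. Qed.

Lemma S_valid_step c h l c' v : ustep c l c' -> S_valid c h v -> S_valid c' (l :: h) v.
Proof.
  destruct v as [[[ts ss] rs] ps]; intros Hs (Hrs & Hrec & Hiss).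
  split; [exact Hrs | split; [exact (recorded_cons l Hrec) |]].
  exact (at_ptr_impl (fun t r => issued_step Hs) Hiss).
Qed.

Lemma sealed_recorded_step c h l c' ts ps :
  ustep c l c' -> sealed_recorded c h ts ps -> sealed_recorded c' (l :: h) ts ps.
Proof.
  intros Hs [Hrec Hsealed]; split; [exact (recorded_cons l Hrec) |].
  exact (at_ptr_impl (fun t r => sealed_step Hs) Hsealed).
Qed.

Lemma A_valid_step c h l c' a : ustep c l c' -> A_valid c h a -> A_valid c' (l :: h) a.
Proof.
  destruct a as [[t o] x]; intro Hs; apply at_ptr_impl.
  intros t' r [Hin Hiss]; split; [right; exact Hin | exact (issued_step Hs Hiss)].
Qed.

Lemma commit_fresh_step c h l c' ts ss rs ps t1 p1 :
  invariant c h -> ustep c l c' -> sealed_recorded c h ts ps ->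
  commit_fresh c h (ts, ss, rs, ps) t1 p1 -> commit_fresh c' (l :: h) (ts, ss, rs, ps) t1 p1.
Proof.
  intros Hinv Hs [Hrec _] [Hp1 Hfresh]; split; [exact Hp1 |]; intros ES Hw.
  pose proof (succ12_not_recorded Hinv Hs ES Hrec) as Hn.
  rewrite (step_cS_nonsucc Hs Hn) in ES.
  exact (Hfresh ES (written_other Hn Hw)).
Qed.

Lemma local_valid_step c h l c' q s :
  invariant c h -> ustep c l c' -> local_valid c h q s -> local_valid c' (l :: h) q s.
Proof.
  intros Hinv Hs.
  destruct s; cbn [local_valid]; intuition idtac;
    first [ apply in_cons | apply (S_valid_step Hs) | apply (sealed_recorded_step Hs)
          | apply (A_valid_step Hs) | apply (commit_fresh_step Hinv Hs) ];
    assumption.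
Qed.

Lemma tickets_next c h l c' :
  invariant c h -> ustep c l c' -> forall r t, In (LFI r t) (l :: h) -> t < cC c'.
Proof.
  intros Hinv Hs r t [-> | Hin].
  - inversion Hs; simpl; lia.
  - pose proof (inv_tickets Hinv Hin); pose proof (step_cC Hs); lia.
Qed.

Lemma A_valid_next c h l c' : invariant c h -> ustep c l c' -> A_valid c' (l :: h) (cA c').
Proof.
  intros Hinv Hs.
  pose proof (tickets_next Hinv Hs) as Htk.
  pose proof (A_valid_step Hs (inv_A Hinv)) as Hold.
  pose proof (inv_local Hinv (actor l)) as Hloc.
  destruct Hs; unfold setloc in *; simpl in *; try exact Hold;
    rewrite H in Hloc; cbn [local_valid] in Hloc;
    assert (Hin : In (LFI p t) h) by tauto;
    (split; [right; exact Hin |]);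
    (split; [apply (Htk p); right; exact Hin | intro; simpl; rewrite upd_same; discriminate]).
Qed.

Lemma S_valid_next c h l c' : invariant c h -> ustep c l c' -> S_valid c' (l :: h) (cS c').
Proof.
  intros Hinv Hs; destruct (is_succ12_dec l) as [(q & w & ->) | Hn].
  - destruct w as [[[t1 s1] rs1] p1].
    destruct (succ12_fresh Hinv Hs) as (r & -> & _ & _ & Hiss).
    pose proof (issued_step Hs Hiss) as Hiss'.
    inversion Hs; subst; simpl.
    split; [discriminate | split; [right; left; do 3 eexists; reflexivity | exact Hiss']].
  - rewrite (step_cS_nonsucc Hs Hn); exact (S_valid_step Hs (inv_S Hinv)).
Qed.

Lemma overwritten_next c h l c' : invariant c h -> ustep c l c' ->
  forall t r, written (l :: h) t (PH r) -> spair (cS c') <> (t, PH r) -> sealed c' t r.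
Proof.
  intros Hinv Hs t r Hw Hne; apply (sealed_step Hs).
  destruct (is_succ12_dec l) as [(q & w & ->) | Hn].
  - rewrite (step_cS_succ Hs) in Hne.
    destruct Hw as [(q' & s' & rs' & Ew) | Hw].
    + injection Ew as _ ->; contradiction (Hne eq_refl).
    + destruct (time_ptr_eq_dec (spair (cS c)) (t, PH r)) as [Ecur | Eold].
      * pose proof (succ12_overwrites_sealed Hinv Hs) as Hsealed.
        rewrite Ecur in Hsealed; exact Hsealed.
      * exact (inv_overwritten Hinv Hw Eold).
  - rewrite (step_cS_nonsucc Hs Hn) in Hne.
    exact (inv_overwritten Hinv (written_other Hn Hw) Hne).
Qed.

Lemma S_valid_sealed c h ts ss rs ps :
  S_valid c h (ts, ss, rs, ps) -> deref (cH c) ps <> (ts, Null) -> sealed_recorded c h ts ps.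
Proof.
  intros (_ & Hrec & Hiss) Hread; split; [exact Hrec |].
  destruct ps as [| r]; simpl in *; [exact I | split; assumption].
Qed.

Lemma commit_fresh_of_read c h ts ss rs ps t1 p1 :
  invariant c h -> sealed_recorded c h ts ps -> deref (cH c) p1 = (t1, Null) ->
  commit_fresh c h (ts, ss, rs, ps) t1 p1.
Proof.
  intros Hinv [_ Hsealed] Hread; split; [intros ->; discriminate |].
  intros ES Hw; destruct p1 as [| r]; [discriminate |]; simpl in Hread.
  pose proof (written_unsealed_current Hinv Hw Hread) as Ecur.
  rewrite ES in Ecur; injection Ecur as -> ->.
  exact (proj2 Hsealed Hread).
Qed.

Lemma local_valid_actor_next c h l c' : invariant c h -> ustep c l c' ->
  local_valid c' (l :: h) (actor l) (cloc c' (actor l)).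
Proof.
  intros Hinv Hs.
  pose proof (inv_local Hinv (actor l)) as Hloc.
  pose proof (local_valid_step Hinv Hs Hloc) as Hold.
  pose proof (S_valid_next Hinv Hs) as HS.
  pose proof (A_valid_next Hinv Hs) as HA.
  assert (Hcommit : forall ts ss rs ps t1 p1, sealed_recorded c h ts ps ->
            deref (cH c) p1 = (t1, Null) -> commit_fresh c' (l :: h) (ts, ss, rs, ps) t1 p1)
    by (intros; apply (commit_fresh_step Hinv Hs); [| apply commit_fresh_of_read]; assumption).
  destruct Hs; unfold setloc in *; cbn [cloc cS cA cH actor] in *; rewrite upd_same;
    rewrite H in Hloc, Hold; cbn [local_valid] in *; try tauto.
  - left; reflexivity.
  - rewrite H0 in HS; tauto.
  -
    destruct Hold as [Hin HSv]; split; [exact Hin |].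
    apply (S_valid_sealed HSv); cbn [deref cH]; rewrite upd_same.
    intro E; injection E; destruct HSv; contradiction.
  -
    destruct Hold as [Hin HSv]; split; [exact Hin | exact (S_valid_sealed HSv H0)].
  - rewrite H0 in HA; tauto.
  -
    destruct Hold as (Hin & HSR & HAv); refine (conj Hin (conj HSR (conj HAv _))).
    intro E; rewrite E in H0; apply Hcommit; [tauto | exact H0].
Qed.

Lemma invariant_step c h l c' : invariant c h -> ustep c l c' -> invariant c' (l :: h).
Proof.
  intros Hinv Hs; split.
  - exact (tickets_next Hinv Hs).
  - exact (A_valid_next Hinv Hs).
  - exact (S_valid_next Hinv Hs).
  - exact (overwritten_next Hinv Hs).
  - intro q; destruct (Nat.eq_dec q (actor l)) as [-> | Hq].
    + exact (local_valid_actor_next Hinv Hs).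
    + rewrite (step_cloc_other Hs Hq); exact (local_valid_step Hinv Hs (inv_local Hinv q)).
Qed.

Lemma step_cinv c l c' p : ustep c l c' ->
  cinv c' p = S (cinv c p) \/
  (cinv c' p = cinv c p /\ forall o, cloc c' p = At2 o -> cloc c p = At2 o).
Proof.
  intro Hs; destruct Hs; unfold setloc; cbn [cinv cloc]; unfold upd;
    destruct (Nat.eqb_spec p p0); subst; auto; right; split; congruence.
Qed.

Lemma step_LFI c p v c' : ustep c (LFI p v) c' ->
  (exists o, cloc c p = At2 o) /\ cinv c' p = cinv c p /\ forall o, cloc c' p <> At2 o.
Proof.
  intro Hs; inversion Hs; subst; cbn [cinv cloc].
  split; [eauto | split; [reflexivity | intro; rewrite upd_same; discriminate]].
Qed.

End Invariant.

Fixpoint history {Q RES : Type} (lab : nat -> label Q RES) (k : nat) : list (label Q RES) :=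
  match k with
  | 0 => []
  | S k => lab k :: history lab k
  end.

Lemma in_history {Q RES : Type} (lab : nat -> label Q RES) k x :
  In x (history lab k) -> exists m, m < k /\ lab m = x.
Proof.
  induction k as [| k IH]; simpl; [tauto |].
  intros [<- | Hin]; [exists k; split; [lia | reflexivity] |].
  destruct (IH Hin) as (m & Hm & E); exists m; split; [lia | exact E].
Qed.

Lemma written_history {Q RES : Type} (lab : nat -> label Q RES) k m t x :
  m < k -> writes (lab m) t x -> written (history lab k) t x.
Proof.
  induction k as [| k IH]; intros Hm Hw; [lia |].
  destruct (Nat.eq_dec m k) as [-> | Hne]; [left; exact Hw | right; apply IH; [lia | exact Hw]].
Qed.

Lemma line12_for_op {OP Q RES : Type} (cfg : nat -> config OP Q RES) lab T i q t1 s1 rs1 r m :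
  lab i = LSucc12 q (t1, s1, rs1, PH r) -> m < T -> lab m = LFI r t1 ->
  line12_for cfg lab T i (OInv r (cinv (cfg m) r)).
Proof.
  intros Ei Hm Em; exists q, t1, s1, rs1, (PH r).
  split; [exact Ei | split; [exists m; auto | reflexivity]].
Qed.

Section Execution.
Context {OP Q RES : Type} (delta : Q -> OP -> Q -> RES -> Prop)
  (cfg : nat -> config OP Q RES) (lab : nat -> label Q RES) (T : nat).
Hypothesis Hsteps : forall i, i < T -> step delta (cfg i) (lab i) (cfg (S i)).

Lemma invariant_history (s0 : Q) (H0 : nat -> nat * rval RES) :
  cfg 0 = init s0 H0 -> forall k, k <= T -> invariant (cfg k) (history lab k).
Proof.
  intros Hinit k; induction k as [| k IH]; intro Hk.
  - rewrite Hinit; apply invariant_init.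
  - exact (invariant_step (IH ltac:(lia)) (Hsteps (i := k) ltac:(lia))).
Qed.

Lemma cinv_after_ticket m r v : lab m = LFI r v -> forall k, m < k -> k <= T ->
  cinv (cfg m) r < cinv (cfg k) r \/
  (cinv (cfg k) r = cinv (cfg m) r /\ forall o, cloc (cfg k) r <> At2 o).
Proof.
  intros Em k Hmk HkT; induction k as [| k IH]; [lia |].
  pose proof (Hsteps (i := k) ltac:(lia)) as Hs.
  destruct (Nat.eq_dec m k) as [<- | Hne].
  - rewrite Em in Hs; destruct (step_LFI Hs) as (_ & Hc & Hl); right; auto.
  - destruct (IH ltac:(lia) ltac:(lia)) as [Hlt | [Heq Hl]];
      destruct (step_cinv r Hs) as [Hc | [Hc Hback]]; try (left; lia).
    right; split; [lia | intros o E; exact (Hl o (Hback o E))].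
Qed.

Lemma ticket_cinv_lt m1 m2 r v1 v2 : m1 < m2 -> m2 < T ->
  lab m1 = LFI r v1 -> lab m2 = LFI r v2 -> cinv (cfg m1) r < cinv (cfg m2) r.
Proof.
  intros Hlt HT E1 E2.
  destruct (cinv_after_ticket E1 Hlt ltac:(lia)) as [Hc | [_ Hl]]; [exact Hc |].
  pose proof (Hsteps HT) as Hs; rewrite E2 in Hs.
  destruct (step_LFI Hs) as ((o & Ho) & _); contradiction (Hl o Ho).
Qed.

Lemma ticket_unique m1 m2 r v1 v2 : m1 < T -> m2 < T ->
  lab m1 = LFI r v1 -> lab m2 = LFI r v2 -> cinv (cfg m1) r = cinv (cfg m2) r -> v1 = v2.
Proof.
  intros H1 H2 E1 E2 Hc.
  destruct (Nat.lt_total m1 m2) as [Hlt | [-> | Hlt]].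
  - pose proof (ticket_cinv_lt Hlt H2 E1 E2); lia.
  - rewrite E1 in E2; injection E2; auto.
  - pose proof (ticket_cinv_lt Hlt H1 E2 E1); lia.
Qed.

Lemma commit_ticket (s0 : Q) (H0 : nat -> nat * rval RES) :
  cfg 0 = init s0 H0 -> forall i, i < T -> is_succ12 (lab i) ->
  exists q t1 s1 rs1 r m, lab i = LSucc12 q (t1, s1, rs1, PH r) /\
    ~ written (history lab i) t1 (PH r) /\ m < i /\ lab m = LFI r t1.
Proof.
  intros Hinit i Hi (q & [[[t1 s1] rs1] p1] & Ei).
  pose proof (Hsteps Hi) as Hs; rewrite Ei in Hs.
  pose proof (invariant_history Hinit (k := i) ltac:(lia)) as Hinv.
  destruct (succ12_fresh Hinv Hs) as (r & -> & Hnew & Hin & _).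
  destruct (in_history Hin) as (m & Hm & Em).
  exists q, t1, s1, rs1, r, m; auto.
Qed.

End Execution.

Theorem mainTheorem13 (OP Q RES : Type) (delta : Q -> OP -> Q -> RES -> Prop)
  (s0 : Q) (H0 : nat -> nat * rval RES)
  (cfg : nat -> config OP Q RES) (lab : nat -> label Q RES) (T : nat) :
  cfg 0 = init s0 H0 ->
  (forall i, i < T -> step delta (cfg i) (lab i) (cfg (S i))) ->
  forall j i, j < i -> i < T ->
    is_succ12 (lab j) -> is_succ12 (lab i) ->
    exists oj oi, oj <> oi /\
      line12_for cfg lab T j oj /\ line12_for cfg lab T i oi.
Proof.
  intros Hinit Hsteps j i Hji HiT Sj Si.
  destruct (commit_ticket Hsteps Hinit (i := j) ltac:(lia) Sj)
    as (qj & tj & sj & rsj & rj & mj & Ej & _ & Hmj & Emj).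
  destruct (commit_ticket Hsteps Hinit HiT Si)
    as (qi & ti & si & rsi & ri & mi & Ei & Hnew & Hmi & Emi).
  exists (OInv rj (cinv (cfg mj) rj)), (OInv ri (cinv (cfg mi) ri)).
  split; [| split; eapply line12_for_op; eauto; lia].
  intro Eop; injection Eop as <- Ecinv.
  assert (tj = ti) as <-
    by exact (ticket_unique Hsteps (m1 := mj) (m2 := mi) ltac:(lia) ltac:(lia) Emj Emi Ecinv).
  apply Hnew, (written_history Hji); rewrite Ej; do 3 eexists; reflexivity.
Qed.
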